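(* Let $(M,S)$ be a covered map and $(M^*,\bar S)$ its dual covered map. If the mobile $B=\Psi_2(M,S)$ is $(H',\pi,\alpha')$ with root $i$, then the mobile $\Psi_2(M^*,\bar S)$ is (isomorphic to) the map $(H',\pi^{-1},\alpha')$ with root $o=\alpha'(i)$.
   Context: Permutations compose right to left. A map is $M=(H,\sigma,\alpha)$, $H$ finite, $\alpha$ fixed-point-free involution, $\sigma$ permutation, $\langle\sigma,\alpha\rangle$ transitive, root $r\in H$, up to root-preserving relabelling; $\phi=\sigma\alpha$; dual $M^*=(H,\phi,\alpha)$ with the same root. $\pi_{|S}$ is obtained from the cycles of $\pi$ by erasing elements not in $S$. A covered map is $(M,S)$ with $S$ stable by $\alpha$ and $(S,\sigma_{|S},\alpha_{|S})$ a connecting unicellular map ($\sigma_{|S},\alpha_{|S}$ transitive on $S$, $S$ meets every cycle of $\sigma$ — $S=\emptyset$ allowed if $\sigma$ has one cycle — and $\sigma_{|S}\alpha_{|S}$ cyclic); its dual is $(M^*,H\setminus S)$. The motion function $\theta(h)=\sigma\alpha(h)$ ($h\in S$), $\sigma(h)$ ($h\notin S$) is cyclic and defines the order $r\prec_S\theta(r)\prec_S\cdots$. $\Delta(M,S)=(M,(I,O))$ with $I=\{h\in S:\alpha(h)\prec_S h\}\cup\{h\notin S:h\prec_S\alpha(h)\}$, $O=H\setminus I$. Unfolding of an oriented map $(M,(I,O))$: new elements $i,o\notin H$, $H'=H\cup\{i,o\}$, $I'=I\cup\{i\}$, $O'=O\cup\{o\}$, $\alpha'$ extends $\alpha$ with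 $\alpha'(i)=o$; $\sigma'$ inserts $i$ just before $r$ in the cycle of $\sigma$ containing $r$ and fixes $o$; $\phi'$ inserts $o$ just before $r$ in the cycle of $\phi$ containing $r$ and fixes $i$; $\pi_\circ=\sigma'_{|I'}$, $\pi_\bullet=\phi'_{|O'}$ (extended by the identity), $\pi=\pi_\circ\pi_\bullet^{-1}$. The mobile is $\Lambda_2(M,(I,O))=(H',\pi,\alpha')$ rooted at $i$, and $\Psi_2=\Lambda_2\circ\Delta$. *)

From mathcomp Require Import all_boot all_fingroup.
Set Implicit Arguments. Unset Strict Implicit. Unset Printing Implicit Defensive.

(* pi_{|S}: for x in S, the first pi^k x (k >= 1) lying in S;
   extended by the identity outside S. *)
Definition restr (T : finType) (p : T -> T) (S : {set T}) (x : T) : T :=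
  if x \in S then
    iter (find (fun n => iter n.+1 p x \in S) (iota 0 #|T|)).+1 p x
  else x.

Section Maps.
Variable T : finType.

Definition is_map (s a : T -> T) : Prop :=
  [/\ forall h, a (a h) = h,
      forall h, a h != h &
      forall x y, connect [rel u v | (v == s u) || (v == a u)] x y].

Definition covered_map (s a : T -> T) (S : {set T}) : Prop :=
  [/\ forall h, (a h \in S) = (h \in S),
      forall x y, x \in S -> y \in S ->
        connect [rel u v | (v == restr s S u) || (v == restr a S u)] x y,
      (forall h, exists k, iter k s h \in S) \/
        (S = set0 /\ forall x y, fconnect s x y) &
      forall x y, x \in S -> y \in S ->
        fconnect (fun h => restr s S (restr a S h)) x y].

Definition motion (s a : T -> T) (S : {set T}) (h : T) : T :=
  if h \in S then s (a h) else s h.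

(* position in the order r <_S theta(r) <_S ... *)
Definition pos (s a : T -> T) (r : T) (S : {set T}) (h : T) : nat :=
  findex (motion s a S) r h.

Definition DeltaI (s a : T -> T) (r : T) (S : {set T}) : {set T} :=
  [set h | if h \in S then pos s a r S (a h) < pos s a r S h
           else pos s a r S h < pos s a r S (a h)].

(* Unfolding: H' = H + {i, o}, with i = inr true, o = inr false. *)
Local Notation H' := (T + bool)%type.
Definition iH : H' := inr true.
Definition oH : H' := inr false.

Definition alpha' (a : T -> T) (x : H') : H' :=
  match x with inl h => inl (a h) | inr b => inr (~~ b) end.

(* i inserted just before r in the sigma-cycle of r; o fixed *)
Definition sigma' (s : T -> T) (r : T) (x : H') : H' :=
  match x with
  | inl h => if s h == r then iH else inl (s h)
  | inr true => inl r
  | inr false => oH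
  end.

(* o inserted just before r in the phi-cycle of r (phi = sigma alpha); i fixed *)
Definition phi' (s a : T -> T) (r : T) (x : H') : H' :=
  match x with
  | inl h => if s (a h) == r then oH else inl (s (a h))
  | inr true => iH
  | inr false => inl r
  end.

Definition I' (I : {set T}) : {set H'} :=
  [set x | match x with inl h => h \in I | inr b => b end].

(* pi = pi_circ pi_bullet^{-1} of the mobile Lambda_2(M,(I,O)) *)
Definition Lambda2_pi (s a : T -> T) (r : T) (I : {set T}) : H' -> H' :=
  fun x => restr (sigma' s r) (I' I)
             (finv (restr (phi' s a r) (~: I' I)) x).

Definition Psi2_pi (s a : T -> T) (r : T) (S : {set T}) : H' -> H' :=
  Lambda2_pi s a r (DeltaI s a r S).

End Maps.

From mathcomp Require Import all_boot all_fingroup.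
Set Implicit Arguments. Unset Strict Implicit. Unset Printing Implicit Defensive.

(* The dual covered map (M^*, H \ S) has the same motion function as (M, S),
   hence the same order on H; since alpha(h) and h are never equal, Delta
   orients every edge the other way: I^* = O.  Exchanging the two new darts i
   and o turns the unfolded sigma' (resp. phi') of the dual into the unfolded
   phi' (resp. sigma') of M, and exchanges I' and O'.  So the exchange of i
   and o conjugates pi^* = pi_circ^* (pi_bullet^* )^-1 into
   pi_bullet pi_circ^-1 = pi^-1. *)

Section Restriction.
Variables (T : finType) (p : T -> T).
Hypothesis p_inj : injective p.
Implicit Types (S : {set T}) (x y z : T).

Lemma iter_inj n : injective (iter n p).
Proof. by elim: n => [|n IHn] x y //= /p_inj; apply: IHn. Qed.

Lemma restr_first_return S z : z \in S ->
  let n := find (fun n => iter n.+1 p z \in S) (iota 0 #|T|) in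
  [/\ restr p S z = iter n.+1 p z, iter n.+1 p z \in S &
      forall j, j < n -> iter j.+1 p z \notin S].
Proof.
move=> zS n.
have has_return : has (fun n => iter n.+1 p z \in S) (iota 0 #|T|).
  apply/hasP; exists (fingraph.order p z).-1.
    by rewrite mem_iota /= add0n -ltnS (orderSpred p z) ltnS max_card.
  by rewrite orderSpred iter_order.
have n_lt : n < #|T| by rewrite -[X in _ < X](size_iota 0) -has_find.
split; first by rewrite /restr zS.
  by have := nth_find 0 has_return; rewrite nth_iota.
move=> j lt_jn; have := before_find 0 lt_jn.
by rewrite nth_iota ?add0n ?(ltn_trans lt_jn) // => ->.
Qed.

Lemma restr_in S z : z \in S -> restr p S z \in S.
Proof. by case/restr_first_return => ->. Qed.

Lemma restr_stable S z : z \in S -> p z \in S -> restr p S z = p z.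
Proof.
move=> zS pzS; case: (restr_first_return zS) => ->.
by case: (find _ _) => // n _ /(_ 0 isT); rewrite pzS.
Qed.

Lemma restr_inj S : injective (restr p S).
Proof.
pose n x := find (fun n => iter n.+1 p x \in S) (iota 0 #|T|).
have inj_le x y : x \in S -> y \in S -> n x <= n y ->
    restr p S x = restr p S y -> x = y.
  move=> xS yS le_xy; case: (restr_first_return xS) => -> _ _.
  case: (restr_first_return yS) => -> _ ret_y.
  rewrite -/(n x) -/(n y) -(subnK le_xy) -addnS addnC iterD => /iter_inj x_eq.
  rewrite x_eq in xS *; move: xS.
  case d_eq: (n y - n x) => [|d] //= dS.
  by have := ret_y d; rewrite -/(n y) dS -d_eq leq_subr => /(_ isT).
move=> x y; case xS: (x \in S); case yS: (y \in S).
- case: (leqP (n x) (n y)) => [le | /ltnW le] e; first exact: inj_le.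
  exact/esym/inj_le.
- by move=> e; have := restr_in xS; rewrite e /restr !yS.
- by move=> e; have := restr_in yS; rewrite -e /restr !xS.
- by rewrite /restr xS yS.
Qed.

End Restriction.

Section Transport.
Variables (U : finType) (f p q : U -> U).
Hypothesis qf_fp : forall y, q (f y) = f (p y).

Lemma iter_transport n x : iter n q (f x) = f (iter n p x).
Proof. by elim: n => //= n ->. Qed.

Lemma restr_transport (S1 S2 : {set U}) x :
  (forall y, (f y \in S2) = (y \in S1)) -> restr q S2 (f x) = f (restr p S1 x).
Proof.
move=> memf; rewrite /restr memf.
have -> : find (fun n => iter n.+1 q (f x) \in S2) (iota 0 #|U|) =
          find (fun n => iter n.+1 p x \in S1) (iota 0 #|U|).
  by apply: eq_find => n; rewrite iter_transport memf.
by case: (x \in S1); rewrite ?iter_transport.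
Qed.

Lemma finv_transport x :
  injective p -> injective q -> finv q (f x) = f (finv p x).
Proof.
by move=> p_inj q_inj; apply: (q_inj); rewrite (f_finv q_inj) qf_fp (f_finv p_inj).
Qed.

End Transport.

Lemma finv_comp_finv (U : finType) (A B : U -> U) :
    injective A -> injective B ->
  finv (fun x => A (finv B x)) =1 (fun x => B (finv A x)).
Proof. by move=> A_inj B_inj; apply: finv_eq_can => x; rewrite finv_f // f_finv. Qed.

Lemma eq_findex (U : finType) (f g : U -> U) : f =1 g -> findex f =2 findex g.
Proof.
move=> eq_fg x y; rewrite /findex /fingraph.orbit /fingraph.order.
rewrite (eq_card (eq_fconnect eq_fg x)); congr index.
by move: #|_| => n; elim: n x => //= n IHn x; rewrite IHn eq_fg.
Qed.

Section Motion.
Variables (T : finType) (s a : {perm T}) (S : {set T}).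
Hypothesis alpha_stable : forall h, (a h \in S) = (h \in S).
Hypothesis S_meets_cycles :
  (forall h, exists k, iter k s h \in S) \/ (S = set0 /\ forall x y, fconnect s x y).
Hypothesis restr_phi_cyclic : forall x y, x \in S -> y \in S ->
  fconnect (fun h => restr s S (restr a S h)) x y.

Local Notation theta := (motion s a S).

Lemma motion_inj : injective theta.
Proof.
move=> x y; rewrite /motion.
case xS: (x \in S); case yS: (y \in S) => /perm_inj // xy.
- exact: (perm_inj xy).
- by move: xS; rewrite -alpha_stable xy yS.
- by move: yS; rewrite -alpha_stable -xy xS.
Qed.

Lemma iter_motion_notin y k : (forall j, j < k -> iter j s y \notin S) ->
  iter k theta y = iter k s y.
Proof.
elim: k => [//|k IHk] out_y; rewrite iterS IHk => [|j /ltnW]; last exact: out_y.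
by rewrite /motion (negbTE (out_y k (ltnSn k))).
Qed.

Lemma motion_reaches h : (forall h, exists k, iter k s h \in S) ->
  exists2 z, z \in S & fconnect theta h z.
Proof.
move=> meets; have [k kS k_min] := ex_minnP (meets h).
exists (iter k s h) => //; rewrite -iter_motion_notin ?fconnect_iter //.
by move=> j lt_jk; apply/negP => /k_min; rewrite leqNgt lt_jk.
Qed.

(* Starting in S, theta applies alpha and then sigma until it returns to S,
   which is exactly one step of sigma_|S alpha_|S. *)
Lemma motion_connect_restr z :
  z \in S -> fconnect theta z (restr s S (restr a S z)).
Proof.
move=> zS; have azS : a z \in S by rewrite alpha_stable.
rewrite [restr a S z](restr_stable (@perm_inj _ a)) //.
case: (restr_first_return (@perm_inj _ s) azS) => -> _.
set n := find _ _ => out_az.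
suff <- : iter n.+1 theta z = iter n.+1 s (a z) by apply: fconnect_iter.
rewrite iterSr {2}/motion zS iter_motion_notin -?iterSr // => j lt_jn.
by rewrite -iterSr; apply: out_az.
Qed.

Lemma motion_connect_in x y : x \in S -> y \in S -> fconnect theta x y.
Proof.
move=> xS /(restr_phi_cyclic xS) /iter_findex <-.
set F := fun h => restr s S (restr a S h).
suff F_in n : iter n F x \in S /\ fconnect theta x (iter n F x).
  by case: (F_in (findex F x y)).
elim: n => [|n [nS IHn]]; first by split=> //; apply: connect0.
rewrite iterS; split; last exact: connect_trans IHn (motion_connect_restr nS).
by apply: (restr_in (@perm_inj _ s)); apply: (restr_in (@perm_inj _ a)).
Qed.

Lemma motion_cyclic x y : fconnect theta x y.
Proof.
case: S_meets_cycles => [meets | [S0 s_cyclic]].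
  have [zx zxS xzx] := motion_reaches x meets.
  have [zy zyS yzy] := motion_reaches y meets.
  apply: connect_trans xzx (connect_trans (motion_connect_in zxS zyS) _).
  by rewrite fconnect_sym //; apply: motion_inj.
by rewrite (@eq_fconnect _ _ s) // => h; rewrite /motion S0 in_set0.
Qed.

End Motion.

Lemma motion_dual (T : finType) (s a : T -> T) (S : {set T}) :
  involutive a -> motion (fun h => s (a h)) a (~: S) =1 motion s a S.
Proof.
by move=> aK h; rewrite /motion in_setC; case: (h \in S); rewrite /= ?aK.
Qed.

Lemma findex_inj (T : finType) (f : T -> T) x y z :
  fconnect f x y -> fconnect f x z -> findex f x y = findex f x z -> y = z.
Proof.
by move=> /iter_findex ey /iter_findex ez e; rewrite -[y]ey -[z]ez e.
Qed.

Lemma DeltaI_dual (T : finType) (s a : T -> T) (r : T) (S : {set T}) :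
    involutive a -> (forall h, a h != h) ->
    (forall h, fconnect (motion s a S) r h) ->
  DeltaI (fun h => s (a h)) a r (~: S) = ~: DeltaI s a r S.
Proof.
move=> aK a_fixfree theta_cyclic; apply/setP => h.
rewrite /DeltaI /pos !inE !(eq_findex (motion_dual s S aK)).
have pos_neq : findex (motion s a S) r h != findex (motion s a S) r (a h).
  apply: contra_neq (a_fixfree h) => pos_eq.
  exact/esym/(findex_inj (theta_cyclic h) (theta_cyclic (a h)) pos_eq).
by case: (h \in S); rewrite /= -leqNgt ltn_neqAle ?pos_neq // eq_sym pos_neq.
Qed.

Definition swap_io (T : Type) (x : T + bool) : T + bool :=
  if x is inr b then inr (~~ b) else x.

Lemma swap_ioK (T : Type) : involutive (@swap_io T).
Proof. by case=> //= b; rewrite negbK. Qed.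

Section Unfolding.
Variables (T : finType) (s a : T -> T) (r : T).
Hypotheses (s_inj : injective s) (aK : involutive a).

Lemma sigma'_inj (p : T -> T) : injective p -> injective (sigma' p r).
Proof.
move=> p_inj [x|[]] [y|[]] //=; rewrite /iH /oH;
  repeat case: ifP => /eqP; move=> *; subst; try congruence.
all: by congr inl; apply: p_inj; congruence.
Qed.

Lemma sigma'_dual x :
  sigma' (fun h => s (a h)) r (swap_io x) = swap_io (phi' s a r x).
Proof. by case: x => [h|[]] //=; case: ifP. Qed.

Lemma phi'_dual x :
  phi' (fun h => s (a h)) a r (swap_io x) = swap_io (sigma' s r x).
Proof. by case: x => [h|[]] //=; rewrite aK; case: ifP. Qed.

Lemma phi'_inj : injective (phi' s a r).
Proof.
have sa_inj : injective (fun h => s (a h)) by move=> u v /s_inj/(inv_inj aK).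
move=> x y /(congr1 (@swap_io T)); rewrite -!sigma'_dual.
by move/(sigma'_inj sa_inj)/(can_inj (@swap_ioK T)).
Qed.

Lemma mem_I'_swap (I : {set T}) y : (swap_io y \in I' (~: I)) = (y \notin I' I).
Proof. by case: y => [h|b]; rewrite /= !inE. Qed.

Lemma Lambda2_pi_dual (I : {set T}) x :
  swap_io (Lambda2_pi (fun h => s (a h)) a r (~: I) x)
  = finv (Lambda2_pi s a r I) (swap_io x).
Proof.
set A := restr (sigma' s r) (I' I); set B := restr (phi' s a r) (~: I' I).
have A_inj : injective A by apply/restr_inj/sigma'_inj.
have B_inj : injective B by apply/restr_inj/phi'_inj.
have dual_A y : restr (phi' (fun h => s (a h)) a r) (~: I' (~: I)) (swap_io y)
                = swap_io (A y).
  apply: restr_transport => z; first exact: phi'_dual.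
  by rewrite in_setC mem_I'_swap negbK.
have dual_B y : restr (sigma' (fun h => s (a h)) r) (I' (~: I)) (swap_io y)
                = swap_io (B y).
  by apply: restr_transport => z; rewrite ?sigma'_dual // mem_I'_swap in_setC.
have dual_A_inj : injective (restr (phi' (fun h => s (a h)) a r) (~: I' (~: I))).
  move=> u v; rewrite -[u]swap_ioK -[v]swap_ioK !dual_A.
  by move/(can_inj (@swap_ioK T))/A_inj ->.
rewrite /Lambda2_pi -{1}[x]swap_ioK.
rewrite (finv_transport dual_A _ A_inj dual_A_inj) dual_B.
by rewrite swap_ioK finv_comp_finv.
Qed.

End Unfolding.

Theorem mainTheorem13 (T : finType) (sigma alpha : {perm T}) (r : T)
    (S : {set T}) :
  is_map sigma alpha ->
  covered_map sigma alpha S ->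
  exists f : {perm (T + bool)},
    [/\ f (iH T) = oH T,
        forall x, f (alpha' alpha x) = alpha' alpha (f x) &
        forall x, f (Psi2_pi (fun h => sigma (alpha h)) alpha r (~: S) x)
                  = finv (Psi2_pi sigma alpha r S) (f x)].
Proof.
move=> [alphaK alpha_fixfree _] [alpha_stable _ S_meets_cycles restr_phi_cyclic].
have theta_cyclic := motion_cyclic alpha_stable S_meets_cycles restr_phi_cyclic r.
exists (perm (can_inj (@swap_ioK T))); split=> [|[h|b]|x]; rewrite !permE //.
rewrite /Psi2_pi (DeltaI_dual alphaK alpha_fixfree theta_cyclic).
exact: (Lambda2_pi_dual r (@perm_inj _ sigma) alphaK).
Qed.
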